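(* Let $\tau_2\ge 2$, $b>\tau_2$, and $\epsilon>0$ be such that \[\delta:=\frac{b(1-\epsilon)-\tau_2(1+\epsilon)^2}{\tau_2(b-1)(1+\epsilon)}\] satisfies $\delta-\epsilon>0$, and let $C_\epsilon>0$. Then there exists $M_*$ (depending on $\epsilon,b,\tau_2,C_\epsilon$) such that the following holds whenever $M\ge M_*$ and $M':=M^{b}$. Let $F,G:\mathbb{Z}\to\mathbb{C}$ satisfy \begin{align*} F(0)&=1, \qquad F(s)=0\ \text{ if }1\le|s|<M',\\ |F(s)|&\le C_\epsilon M'^{-1+\epsilon}\ \text{ if }M'\le|s|\le M'^{\tau_2(1+\epsilon/2)},\\ |F(s)|&\le\exp\big(-|s/M'^{\tau_2}|^{1/2}\big)\ \text{ if }|s|\ge M'^{\tau_2(1+\epsilon/2)}, \end{align*} and \begin{align*} |G(0)|&\le2,\qquad |G(s)|\le 2|s|^{-\delta+\epsilon}\ \text{ if }0<|s|\le M^{\tau_2(1+\epsilon)},\\ |G(s)|&\le\exp\big(-\tfrac12|s/M^{\tau_2}|^{1/2}\big)\ \text{ if }|s|\ge M^{\tau_2(1+\epsilon)}. \end{align*} Then, with $F*G(s)=\sum_{t\in\mathbb{Z}}F(t)G(s-t)$: (a) $|F*G(s)-G(s)|\le M'^{-\delta}$ if $|s|\le M^{\tau_2(1+\epsilon)}$; (b) $|F*G(s)|\le|s|^{-\delta+\epsilon}$ if $M^{\tau_2(1+\epsilon)}<|s|\le M'^{\tau_2(1+\epsilon)}$; (c) $|F*G(s)|\le\exp\big(-\tfrac12|s/M'^{\tau_2}|^{1/2}\big)$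 if $|s|>M'^{\tau_2(1+\epsilon)}$. *)

From Stdlib Require Import Reals ZArith Lra.
From Coquelicot Require Import Coquelicot.
Open Scope R_scope.

(* Under
   absolute summability (guaranteed by the hypotheses of lemma7) this is the
   usual sum over Z. *)
Definition zsum (f : Z -> C) : C :=
  (Series (fun n => Re (f (Z.of_nat n))) +
   Series (fun n => Re (f (- Z.of_nat (S n))%Z)),
   Series (fun n => Im (f (Z.of_nat n))) +
   Series (fun n => Im (f (- Z.of_nat (S n))%Z))).

Definition zconv (F G : Z -> C) (s : Z) : C :=
  zsum (fun t => Cmult (F t) (G (s - t)%Z)).

Definition zabs (s : Z) : R := Rabs (IZR s).

From Stdlib Require Import Reals ZArith Lra Lia.
From Coquelicot Require Import Coquelicot.
Open Scope R_scope.

(* - every estimate of F*G(s) = sum_t F(t) G(s-t) comes from a pointwise majorant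
     w(t) >= |F(t) G(s-t)| with bounded symmetric partial sums (zsum_Cmod_le);
   - where one factor is stretched-exponentially small, the margin in its exponent
     beats the weight (1+|t|)^2, giving the majorant B/(1+|t|)^2 of total mass 4B;
   - where |s-t| <= K, G(s-t) is dominated by the increment of a bounded staircase
     on Z, so this part of the majorant telescopes (no reindexing of sums needed). *)

Lemma series_nonneg_bounded (a : nat -> R) (X : R) :
  (forall n, 0 <= a n) -> (forall N, sum_n a N <= X) ->
  ex_series a /\ Series a <= X.
Proof.
  intros Ha HX.
  assert (Hinc : forall n, sum_n a n <= sum_n a (S n)).
  { intro n. rewrite sum_Sn. unfold plus; simpl. specialize (Ha (S n)). lra. }
  destruct (ex_finite_lim_seq_incr _ X Hinc HX) as [l Hl].
  assert (Hser : is_series a l) by exact Hl.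
  split; [exists l; exact Hser|].
  rewrite (is_series_unique _ _ Hser).
  exact (is_lim_seq_le _ _ l X HX Hl (is_lim_seq_const X)).
Qed.

Lemma sum_n_nonneg (a : nat -> R) (N : nat) :
  (forall n, 0 <= a n) -> 0 <= sum_n a N.
Proof.
  intro Ha. induction N as [|N IH]; [rewrite sum_O; apply Ha|].
  rewrite sum_Sn. unfold plus; simpl. specialize (Ha (S N)). lra.
Qed.

(* The partial sum of w over the window [-(N+1), N], split as in zsum into
   the halves t >= 0 and t <= -1. *)
Definition zpartial (w : Z -> R) (N : nat) : R :=
  sum_n (fun n => w (Z.of_nat n)) N + sum_n (fun n => w (- Z.of_nat (S n))%Z) N.

Lemma zpartial_summable (w : Z -> R) (X : R) :
  (forall t, 0 <= w t) -> (forall N, zpartial w N <= X) ->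
  ex_series (fun n => w (Z.of_nat n)) /\ ex_series (fun n => w (- Z.of_nat (S n))%Z).
Proof.
  intros Hw HX. unfold zpartial in HX.
  split; apply (series_nonneg_bounded _ X); try (intro; apply Hw); intro N; specialize (HX N).
  - assert (0 <= sum_n (fun n => w (- Z.of_nat (S n))%Z) N) by (apply sum_n_nonneg; intro; apply Hw).
    lra.
  - assert (0 <= sum_n (fun n => w (Z.of_nat n)) N) by (apply sum_n_nonneg; intro; apply Hw).
    lra.
Qed.

Lemma Rabs_Im_le_Cmod (c : C) : Rabs (Im c) <= Cmod c.
Proof. eapply Rle_trans; [apply Rmax_r | apply Rmax_Cmod]. Qed.

Lemma Cmod_le_parts (z : C) (X : R) :
  Rabs (Re z) <= X -> Rabs (Im z) <= X -> Cmod z <= 2 * X.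
Proof.
  intros H1 H2. eapply Rle_trans; [apply Cmod_2Rmax|].
  assert (Hmax : Rmax (Rabs (Re z)) (Rabs (Im z)) <= X) by (apply Rmax_lub; assumption).
  assert (Hmax0 : 0 <= Rmax (Rabs (Re z)) (Rabs (Im z)))
    by (eapply Rle_trans; [apply Rabs_pos | apply Rmax_l]).
  assert (Hsqrt2 : sqrt 2 <= 2).
  { rewrite <- (sqrt_square 2) at 2 by lra. apply sqrt_le_1_alt. lra. }
  apply Rmult_le_compat; [apply sqrt_pos | exact Hmax0 | exact Hsqrt2 | exact Hmax].
Qed.

Lemma series_dominated (g w : nat -> R) :
  (forall n, Rabs (g n) <= w n) -> ex_series w ->
  ex_series g /\ Rabs (Series g) <= Series w.
Proof.
  intros Hg Hw.
  assert (Habs : ex_series (fun n => Rabs (g n))).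
  { apply (@ex_series_le R_AbsRing R_CompleteNormedModule) with w; [|exact Hw].
    intro n. unfold norm; simpl; unfold abs; simpl. rewrite Rabs_Rabsolu. apply Hg. }
  split; [apply ex_series_Rabs; exact Habs|].
  eapply Rle_trans; [apply Series_Rabs; exact Habs|].
  apply Series_le; [|exact Hw]. intro n; split; [apply Rabs_pos | apply Hg].
Qed.

Lemma zsum_Cmod_le (f : Z -> C) (w : Z -> R) (X : R) :
  (forall t, Cmod (f t) <= w t) -> (forall t, 0 <= w t) ->
  (forall N, zpartial w N <= X) -> Cmod (zsum f) <= 2 * X.
Proof.
  intros Hf Hw HX.
  destruct (zpartial_summable w X Hw HX) as [Hpos Hneg].
  set (wp := fun n => w (Z.of_nat n)) in *.
  set (wn := fun n => w (- Z.of_nat (S n))%Z) in *.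
  assert (Hsum : Series wp + Series wn <= X).
  { rewrite <- Series_plus by assumption.
    apply (series_nonneg_bounded (fun n => wp n + wn n) X).
    - intro n. unfold wp, wn. generalize (Hw (Z.of_nat n)) (Hw (- Z.of_nat (S n))%Z). lra.
    - intro N. generalize (sum_n_plus wp wn N). unfold plus; simpl. intros ->. apply HX. }
  assert (Hpart : forall p : C -> R, (forall c, Rabs (p c) <= Cmod c) ->
    Rabs (Series (fun n => p (f (Z.of_nat n))) + Series (fun n => p (f (- Z.of_nat (S n))%Z)))
      <= X).
  { intros p Hp.
    destruct (series_dominated (fun n => p (f (Z.of_nat n))) wp) as [_ H1]; [|exact Hpos|].
    { intro n. eapply Rle_trans; [apply Hp | apply Hf]. }
    destruct (series_dominated (fun n => p (f (- Z.of_nat (S n))%Z)) wn) as [_ H2]; [|exact Hneg|].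
    { intro n. eapply Rle_trans; [apply Hp | apply Hf]. }
    eapply Rle_trans; [apply Rabs_triang|]. lra. }
  apply Cmod_le_parts; [exact (Hpart Re re_le_Cmod) | exact (Hpart Im Rabs_Im_le_Cmod)].
Qed.

Lemma zsum_remove_origin (f : Z -> C) (w : Z -> R) (X : R) :
  (forall t, Cmod (f t) <= w t) -> (forall t, 0 <= w t) -> (forall N, zpartial w N <= X) ->
  Cminus (zsum f) (f 0%Z) = zsum (fun t => if Z.eqb t 0 then RtoC 0 else f t).
Proof.
  intros Hf Hw HX.
  destruct (zpartial_summable w X Hw HX) as [Hpos _].
  set (f0 := fun t => if Z.eqb t 0 then RtoC 0 else f t).
  assert (Hf0 : forall t, Cmod (f0 t) <= w t).
  { intro t. unfold f0. destruct (Z.eqb t 0); [rewrite Cmod_0; apply Hw | apply Hf]. }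
  assert (Hex : forall (g : Z -> C) (p : C -> R), (forall t, Cmod (g t) <= w t) ->
    (forall c, Rabs (p c) <= Cmod c) -> ex_series (fun n => p (g (Z.of_nat n)))).
  { intros g p Hg Hp. apply (series_dominated _ (fun n => w (Z.of_nat n))); [|exact Hpos].
    intro n. eapply Rle_trans; [apply Hp | apply Hg]. }
  unfold zsum, Cminus, Cplus, Copp.
  rewrite (Series_incr_1 _ (Hex f Re Hf re_le_Cmod)), (Series_incr_1 _ (Hex f Im Hf Rabs_Im_le_Cmod)),
    (Series_incr_1 _ (Hex f0 Re Hf0 re_le_Cmod)), (Series_incr_1 _ (Hex f0 Im Hf0 Rabs_Im_le_Cmod)).
  unfold f0, Re, Im; simpl. f_equal; ring.
Qed.

Lemma zpartial_plus (w w' : Z -> R) (N : nat) :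
  zpartial (fun t => w t + w' t) N = zpartial w N + zpartial w' N.
Proof.
  unfold zpartial.
  generalize (sum_n_plus (fun n => w (Z.of_nat n)) (fun n => w' (Z.of_nat n)) N)
    (sum_n_plus (fun n => w (- Z.of_nat (S n))%Z) (fun n => w' (- Z.of_nat (S n))%Z) N).
  unfold plus; simpl. intros -> ->. ring.
Qed.

Lemma zpartial_scal (c : R) (w : Z -> R) (N : nat) :
  zpartial (fun t => c * w t) N = c * zpartial w N.
Proof.
  assert (Hscal : forall (a : nat -> R) n, sum_n (fun k => c * a k) n = c * sum_n a n).
  { intros a n. induction n as [|n IH]; [rewrite !sum_O; reflexivity|].
    rewrite !sum_Sn, IH. unfold plus; simpl. ring. }
  unfold zpartial. rewrite !Hscal. ring.
Qed.

Lemma zpartial_telescope (Phi : Z -> R) (s : Z) (N : nat) :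
  zpartial (fun t => Phi (s - t + 1)%Z - Phi (s - t)%Z) N
  = Phi (s + Z.of_nat N + 2)%Z - Phi (s - Z.of_nat N)%Z.
Proof.
  unfold zpartial.
  assert (Hpos : forall n, sum_n (fun k => Phi (s - Z.of_nat k + 1)%Z - Phi (s - Z.of_nat k)%Z) n
                           = Phi (s + 1)%Z - Phi (s - Z.of_nat n)%Z).
  { induction n as [|n IH].
    - rewrite sum_O. simpl. f_equal; f_equal; lia.
    - rewrite sum_Sn, IH. unfold plus; simpl.
      replace (s - Z.pos (Pos.of_succ_nat n) + 1)%Z with (s - Z.of_nat n)%Z by lia. ring. }
  assert (Hneg : forall n, sum_n (fun k => Phi (s - - Z.of_nat (S k) + 1)%Z
                                           - Phi (s - - Z.of_nat (S k))%Z) n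
                           = Phi (s + Z.of_nat n + 2)%Z - Phi (s + 1)%Z).
  { induction n as [|n IH].
    - rewrite sum_O. simpl. f_equal; f_equal; lia.
    - rewrite sum_Sn, IH. unfold plus; simpl.
      replace (s - Z.neg (Pos.succ (Pos.of_succ_nat n)))%Z with (s + Z.of_nat n + 2)%Z by lia.
      replace (s - Z.neg (Pos.succ (Pos.of_succ_nat n)) + 1)%Z
        with (s + Z.pos (Pos.of_succ_nat n) + 2)%Z by lia.
      replace (s + Z.of_nat n + 2 + 1)%Z with (s + Z.pos (Pos.of_succ_nat n) + 2)%Z by lia.
      ring. }
  rewrite Hpos, Hneg. ring.
Qed.

Lemma zabs_of_nat (n : nat) : zabs (Z.of_nat n) = INR n.
Proof. unfold zabs. rewrite <- INR_IZR_INZ. apply Rabs_pos_eq, pos_INR. Qed.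

Lemma zabs_neg_succ (n : nat) : zabs (- Z.of_nat (S n))%Z = INR n + 1.
Proof.
  unfold zabs. rewrite opp_IZR, <- INR_IZR_INZ, Rabs_Ropp, S_INR.
  apply Rabs_pos_eq. generalize (pos_INR n). lra.
Qed.

Lemma zabs_nonneg (t : Z) : 0 <= zabs t.
Proof. apply Rabs_pos. Qed.

Lemma zabs_0 : zabs 0 = 0.
Proof. unfold zabs. apply Rabs_R0. Qed.

Lemma zabs_ge_1 (t : Z) : t <> 0%Z -> 1 <= zabs t.
Proof. intro Ht. unfold zabs. rewrite <- abs_IZR. apply IZR_le. lia. Qed.

Lemma zabs_sub_ge_l (s t : Z) : zabs t - zabs s <= zabs (s - t).
Proof. unfold zabs. rewrite minus_IZR, Rabs_minus_sym. apply Rabs_triang_inv. Qed.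

Lemma zabs_sub_ge_r (s t : Z) : zabs s - zabs t <= zabs (s - t).
Proof. unfold zabs. rewrite minus_IZR. apply Rabs_triang_inv. Qed.

(* The hypotheses of Lemma 7 are phrased with |s/X|; this is |s|/X. *)
Lemma Rabs_IZR_div (s : Z) (X : R) : 0 < X -> Rabs (IZR s / X) = zabs s / X.
Proof. intro HX. unfold zabs, Rdiv. rewrite Rabs_mult, Rabs_inv, (Rabs_pos_eq X); lra. Qed.

Lemma tail_hyp_zabs (H : Z -> C) (phi : R -> R) (X lo : R) : 0 < X ->
  (forall s, lo <= zabs s -> Cmod (H s) <= phi (Rabs (IZR s / X))) ->
  forall s, lo <= zabs s -> Cmod (H s) <= phi (zabs s / X).
Proof. intros HX Hb s Hs. rewrite <- Rabs_IZR_div by exact HX. apply Hb, Hs. Qed.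

(* sum_{n<=N} 1/(n+1)^2 <= 2 - 1/(N+1), by telescoping 1/(n(n+1)). *)
Lemma sum_inv_square (N : nat) : sum_n (fun n => / (INR n + 1) ^ 2) N <= 2 - / (INR N + 1).
Proof.
  induction N as [|N IH].
  - rewrite sum_O. simpl. lra.
  - rewrite sum_Sn, S_INR.
    change (sum_n (fun n => / (INR n + 1) ^ 2) N + / (INR N + 1 + 1) ^ 2
            <= 2 - / (INR N + 1 + 1)).
    assert (HN := pos_INR N).
    assert (Hstep : / (INR N + 1 + 1) ^ 2 <= / (INR N + 1) - / (INR N + 1 + 1)).
    { replace (/ (INR N + 1) - / (INR N + 1 + 1)) with (/ ((INR N + 1) * (INR N + 1 + 1)))
        by (field; lra).
      apply Rinv_le_contravar; nra. }
    lra.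
Qed.

Lemma zpartial_inv_square (N : nat) : zpartial (fun t => / (1 + zabs t) ^ 2) N <= 4.
Proof.
  assert (Hhalf : sum_n (fun n => / (INR n + 1) ^ 2) N <= 2).
  { assert (0 < / (INR N + 1)) by (apply Rinv_0_lt_compat; generalize (pos_INR N); lra).
    generalize (sum_inv_square N). lra. }
  assert (Hpos : sum_n (fun n => / (1 + zabs (Z.of_nat n)) ^ 2) N
                 <= sum_n (fun n => / (INR n + 1) ^ 2) N).
  { apply sum_n_m_le. intro n. rewrite zabs_of_nat, Rplus_comm. lra. }
  assert (Hneg : sum_n (fun n => / (1 + zabs (- Z.of_nat (S n))%Z) ^ 2) N
                 <= sum_n (fun n => / (INR n + 1) ^ 2) N).
  { apply sum_n_m_le. intro n. rewrite zabs_neg_succ. generalize (pos_INR n). intro.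
    apply Rinv_le_contravar; nra. }
  unfold zpartial. lra.
Qed.

Lemma zpartial_inv_square_scaled (B : R) (N : nat) :
  0 <= B -> zpartial (fun t => B / (1 + zabs t) ^ 2) N <= 4 * B.
Proof.
  intro HB. unfold Rdiv. rewrite zpartial_scal.
  generalize (zpartial_inv_square N). nra.
Qed.

Lemma Rpower_pos (x a : R) : 0 < Rpower x a.
Proof. apply exp_pos. Qed.

Lemma Rpower_base_1 (a : R) : Rpower 1 a = 1.
Proof. unfold Rpower. rewrite ln_1, Rmult_0_r. apply exp_0. Qed.

Lemma exp_monotone (x y : R) : x <= y -> exp x <= exp y.
Proof. intros [Hlt | ->]; [left; apply exp_increasing; exact Hlt | right; reflexivity]. Qed.

Lemma exp_nonpos_le_1 (x : R) : x <= 0 -> exp x <= 1.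
Proof. intro Hx. rewrite <- exp_0. apply exp_monotone. exact Hx. Qed.

Lemma ln_le_sub_1 (y : R) : 0 < y -> ln y <= y - 1.
Proof. intro Hy. generalize (exp_ineq1_le (ln y)). rewrite exp_ln by exact Hy. lra. Qed.

Lemma exp_mult_nat (n : nat) (x : R) : exp (INR n * x) = exp x ^ n.
Proof.
  induction n as [|n IH]; [simpl; rewrite Rmult_0_l; apply exp_0|].
  rewrite S_INR, Rmult_plus_distr_r, exp_plus, IH, Rmult_1_l. simpl. ring.
Qed.

(* The polynomial lower bound exp y >= (y/6)^6 (from exp(y/6) >= 1 + y/6);
   it underlies all stretched-exponential estimates below. *)
Lemma pow6_le_exp (y : R) : 0 <= y -> (y / 6) ^ 6 <= exp y.
Proof.
  intro Hy.
  replace (exp y) with (exp (y / 6) ^ 6)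
    by (rewrite <- exp_mult_nat; f_equal; simpl; field).
  apply pow_incr. generalize (exp_ineq1_le (y / 6)). lra.
Qed.

Definition decay_const (c : R) : R := 4 * (6 / c) ^ 6.

Lemma decay_const_pos (c : R) : 0 < c -> 0 < decay_const c.
Proof.
  intro Hc. unfold decay_const.
  apply Rmult_lt_0_compat; [lra | apply pow_lt, Rdiv_lt_0_compat; lra].
Qed.

Lemma exp_sqrt_beats_square (c u Y x : R) :
  0 < c -> 0 < Y -> 1 <= x -> x / Y <= u ->
  exp (- (c * sqrt u)) * (1 + x) ^ 2 <= decay_const c * Y ^ 3.
Proof.
  intros Hc HY Hx Hu.
  assert (HxY : 0 < x / Y) by (apply Rdiv_lt_0_compat; lra).
  set (w := sqrt u).
  assert (Hw2 : w ^ 2 = u) by (unfold w; simpl; rewrite Rmult_1_r; apply sqrt_sqrt; lra).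
  assert (Hw : 0 <= w) by apply sqrt_pos.
  assert (Hpow : (x / Y) ^ 3 <= w ^ 6).
  { replace (w ^ 6) with ((w ^ 2) ^ 3) by ring. apply pow_incr. lra. }
  assert (Hexp : (c / 6) ^ 6 * (x / Y) ^ 3 <= exp (c * w)).
  { eapply Rle_trans; [|apply pow6_le_exp; nra].
    replace ((c * w / 6) ^ 6) with ((c / 6) ^ 6 * w ^ 6) by (field; lra).
    apply Rmult_le_compat_l; [apply pow_le; lra | exact Hpow]. }
  assert (Hprod : (c / 6) ^ 6 * (x / Y) ^ 3 * (decay_const c * Y ^ 3) = 4 * x ^ 3)
    by (unfold decay_const; field; lra).
  assert (Hsq : (1 + x) ^ 2 <= 4 * x ^ 3) by nra.
  assert (HDY : 0 < decay_const c * Y ^ 3)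
    by (apply Rmult_lt_0_compat; [apply decay_const_pos; lra | apply pow_lt; lra]).
  assert (Hep : 0 < exp (c * w)) by apply exp_pos.
  rewrite exp_Ropp.
  apply Rmult_le_reg_l with (exp (c * w)); [exact Hep|].
  rewrite <- Rmult_assoc, Rinv_r, Rmult_1_l by lra.
  apply Rle_trans with (4 * x ^ 3); [exact Hsq|].
  rewrite <- Hprod. apply Rmult_le_compat_r; [lra | exact Hexp].
Qed.

(* Splitting exp(-2c sqrt v) in two halves: one gives the gain exp(-c sqrt v0)
   from v >= v0, the other absorbs the weight (1+x)^2. *)
Lemma stretched_tail_bound (c v v0 Y x : R) :
  0 < c -> 0 < Y -> 1 <= x -> v0 <= v -> x / Y <= v ->
  exp (- (2 * c * sqrt v)) * (1 + x) ^ 2 <= exp (- (c * sqrt v0)) * (decay_const c * Y ^ 3).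
Proof.
  intros Hc HY Hx Hv0 Hv.
  assert (Hsplit : exp (- (2 * c * sqrt v)) <= exp (- (c * sqrt v0)) * exp (- (c * sqrt v))).
  { rewrite <- exp_plus. apply exp_monotone. generalize (sqrt_le_1_alt v0 v Hv0). nra. }
  assert (Hsq : 0 <= (1 + x) ^ 2) by (apply pow_le; lra).
  eapply Rle_trans; [apply Rmult_le_compat_r; [exact Hsq | exact Hsplit]|].
  rewrite Rmult_assoc. apply Rmult_le_compat_l; [left; apply exp_pos|].
  apply exp_sqrt_beats_square; assumption.
Qed.

(* Bernoulli's inequality x^r <= 1 + r(x-1) for 0 <= r <= 1 (weighted AM-GM,
   proved from ln y <= y - 1). *)
Lemma rpower_bernoulli (x r : R) : 0 < x -> 0 <= r <= 1 -> Rpower x r <= 1 + r * (x - 1).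
Proof.
  intros Hx Hr. set (c := Rpower x r). assert (Hc : 0 < c) by apply Rpower_pos.
  assert (H1 : ln (x / c) <= x / c - 1) by (apply ln_le_sub_1; apply Rdiv_lt_0_compat; lra).
  assert (H2 : ln (/ c) <= / c - 1) by (apply ln_le_sub_1; apply Rinv_0_lt_compat; exact Hc).
  assert (Hln : r * ln (x / c) + (1 - r) * ln (/ c) = 0).
  { unfold Rdiv. rewrite ln_mult, ln_Rinv by (try apply Rinv_0_lt_compat; assumption).
    unfold c. rewrite ln_Rpower. ring. }
  assert (Hmean : 0 <= r * (x / c - 1) + (1 - r) * (/ c - 1)) by nra.
  replace (r * (x / c - 1) + (1 - r) * (/ c - 1)) with ((1 + r * (x - 1)) / c - 1)
    in Hmean by (field; lra).
  apply Rmult_le_reg_r with (/ c); [apply Rinv_0_lt_compat; exact Hc|].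
  rewrite Rinv_r by lra. unfold Rdiv in Hmean. lra.
Qed.

(* Concavity of v |-> v^r: its unit increments are at least r v^(r-1). *)
Lemma rpower_increment_lower (v r : R) :
  1 < v -> 0 <= r <= 1 -> r * Rpower v (r - 1) <= Rpower v r - Rpower (v - 1) r.
Proof.
  intros Hv Hr.
  assert (Hratio : 0 < (v - 1) / v) by (apply Rdiv_lt_0_compat; lra).
  assert (Hsplit : Rpower (v - 1) r = Rpower v r * Rpower ((v - 1) / v) r).
  { rewrite Rpower_mult_distr by lra. f_equal. field. lra. }
  assert (Hshift : Rpower v (r - 1) = Rpower v r / v).
  { unfold Rminus. rewrite Rpower_plus, Rpower_Ropp, Rpower_1 by lra. reflexivity. }
  assert (Hb := rpower_bernoulli ((v - 1) / v) r Hratio Hr).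
  replace (1 + r * ((v - 1) / v - 1)) with (1 - r / v) in Hb by (field; lra).
  assert (Hpos : 0 < Rpower v r) by apply Rpower_pos.
  rewrite Hsplit, Hshift.
  assert (Rpower v r * Rpower ((v - 1) / v) r <= Rpower v r * (1 - r / v))
    by (apply Rmult_le_compat_l; lra).
  replace (r * (Rpower v r / v)) with (Rpower v r - Rpower v r * (1 - r / v)) by (field; lra).
  lra.
Qed.

Lemma div_le_div_cross (a b c d : R) : 0 < c -> 0 < d -> a * d <= b * c -> a / c <= b / d.
Proof.
  intros Hc Hd H. apply Rmult_le_reg_r with (c * d); [nra|].
  replace (a / c * (c * d)) with (a * d) by (field; lra).
  replace (b / d * (c * d)) with (b * c) by (field; lra). exact H.
Qed.

Lemma sqrt_scaled_le (k x y : R) : 0 <= k -> 0 <= x -> k ^ 2 * x <= y -> k * sqrt x <= sqrt y.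
Proof.
  intros Hk Hx H. rewrite <- (sqrt_pow2 k Hk), <- sqrt_mult_alt by (apply pow_le; exact Hk).
  apply sqrt_le_1_alt. exact H.
Qed.

Lemma le_div_square (x z B : R) : 0 <= z -> x * (1 + z) ^ 2 <= B -> x <= B / (1 + z) ^ 2.
Proof.
  intros Hz H. assert (Hsq : 0 < (1 + z) ^ 2) by (apply pow_lt; lra).
  apply Rmult_le_reg_r with ((1 + z) ^ 2); [exact Hsq|].
  unfold Rdiv. rewrite Rmult_assoc, Rinv_l by lra. lra.
Qed.

Lemma inv_square_weight_nonneg (B : R) (t : Z) : 0 <= B -> 0 <= B / (1 + zabs t) ^ 2.
Proof.
  intro HB. apply Rdiv_le_0_compat; [exact HB|]. apply pow_lt. generalize (zabs_nonneg t). lra.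
Qed.

Lemma div_le_compat_r (x y d : R) : 0 < d -> x <= y -> x / d <= y / d.
Proof.
  intros Hd Hxy. unfold Rdiv.
  apply Rmult_le_compat_r; [left; apply Rinv_0_lt_compat|]; assumption.
Qed.

Lemma Rpower_eventually_ge (X a : R) :
  0 < a -> Rbar_locally p_infty (fun M => X <= Rpower M a).
Proof.
  intro Ha. set (X1 := Rmax X 1).
  exists (Rpower X1 (/ a)). intros M HM.
  assert (HX1 : 0 < X1) by (apply Rlt_le_trans with 1; [lra | apply Rmax_r]).
  apply Rle_trans with X1; [apply Rmax_l|].
  replace X1 with (Rpower (Rpower X1 (/ a)) a) at 1
    by (rewrite Rpower_mult, Rinv_l, Rpower_1 by lra; reflexivity).
  apply Rle_Rpower_l; [lra | split; [apply Rpower_pos | lra]].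
Qed.

Lemma eventually_ge_1 : Rbar_locally p_infty (fun M => 1 <= M).
Proof. exists 1. intros M HM. lra. Qed.

Lemma pow_dominates (a a' K0 : R) :
  a < a' -> Rbar_locally p_infty (fun M => K0 * Rpower M a <= Rpower M a').
Proof.
  intro Ha. apply (filter_imp (fun M => Rmax K0 0 <= Rpower M (a' - a))).
  - intros M HM. replace a' with ((a' - a) + a) by ring. rewrite Rpower_plus.
    apply Rmult_le_compat_r; [left; apply Rpower_pos|].
    eapply Rle_trans; [apply Rmax_l | exact HM].
  - apply Rpower_eventually_ge. lra.
Qed.

(* exp(k M^g) eventually dominates any constant times a power of M:
   with z = M^(g/2), a ln M <= |a| (2/g) z while k M^g = k z^2. *)
Lemma exp_dominates_pow (k g a K0 : R) :
  0 < k -> 0 < g -> 0 < K0 ->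
  Rbar_locally p_infty (fun M => K0 * Rpower M a <= exp (k * Rpower M g)).
Proof.
  intros Hk Hg HK0.
  set (c := Rabs a * (2 / g)). set (d := Rabs (ln K0)).
  assert (Hc : 0 <= c) by (apply Rmult_le_pos; [apply Rabs_pos | left; apply Rdiv_lt_0_compat; lra]).
  assert (Hd : 0 <= d) by apply Rabs_pos.
  apply (filter_imp (fun M => 1 <= M /\ (d + c) / k + 1 <= Rpower M (g / 2))).
  2: { apply filter_and; [exact eventually_ge_1 | apply Rpower_eventually_ge; lra]. }
  intros M [HM1 Hz]. set (z := Rpower M (g / 2)) in Hz.
  assert (Hsq : Rpower M g = z * z) by (unfold z; rewrite <- Rpower_plus; f_equal; field).
  assert (HlnM : a * ln M <= c * z).
  { assert (HlnM0 : 0 <= ln M) by (rewrite <- ln_1; apply ln_le; lra).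
    assert (Hlnz : ln M = (2 / g) * ln z) by (unfold z; rewrite ln_Rpower; field; lra).
    assert (Hlnz_le : ln z <= z) by (generalize (ln_le_sub_1 z (Rpower_pos _ _)); lra).
    apply Rle_trans with (Rabs a * ln M); [apply Rmult_le_compat_r; [exact HlnM0 | apply RRle_abs]|].
    unfold c. rewrite Hlnz, Rmult_assoc. apply Rmult_le_compat_l; [apply Rabs_pos|].
    apply Rmult_le_compat_l; [left; apply Rdiv_lt_0_compat|]; lra. }
  assert (HkZ : d + c + k <= k * z).
  { apply Rmult_le_compat_l with (r := k) in Hz; [|lra].
    replace (k * ((d + c) / k + 1)) with (d + c + k) in Hz by (field; lra). exact Hz. }
  replace (K0 * Rpower M a) with (exp (ln K0 + a * ln M))
    by (rewrite exp_plus, exp_ln by exact HK0; reflexivity).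
  rewrite Hsq. apply exp_monotone.
  generalize (RRle_abs (ln K0)). fold d. intro HlnK0.
  assert (Hz1 : 1 <= z) by (generalize (Rdiv_le_0_compat (d + c) k); nra).
  nra.
Qed.

Lemma stretched_exp_negligible (K0 a a' k g : R) :
  0 < K0 -> 0 < k -> 0 < g ->
  Rbar_locally p_infty (fun M => K0 * Rpower M a * exp (- (k * Rpower M g)) <= Rpower M a').
Proof.
  intros HK0 Hk Hg.
  apply (filter_imp (fun M => K0 * Rpower M (a - a') <= exp (k * Rpower M g))).
  2: { apply exp_dominates_pow; assumption. }
  intros M HM.
  replace (Rpower M a) with (Rpower M (a - a') * Rpower M a')
    by (rewrite <- Rpower_plus; f_equal; ring).
  assert (He : 0 < exp (k * Rpower M g)) by apply exp_pos.
  assert (Ha' : 0 < Rpower M a') by apply Rpower_pos.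
  rewrite exp_Ropp. apply Rmult_le_reg_r with (exp (k * Rpower M g)); [exact He|].
  rewrite Rmult_assoc, Rinv_l by lra. nra.
Qed.

(* For K >= 1 and 0 <= q < 1, stair is a bounded function on Z
   whose increments stair (u+1) - stair u are 2 at u = 0 and at least
   2|u|^(-q) for 1 <= |u| <= K; it is built from x |-> min(x,K)^(1-q), whose
   increments are controlled by concavity (rpower_increment_lower). *)
Section Staircase.

Variables (K q : R).
Hypothesis HK : 1 <= K.
Hypothesis Hq : 0 <= q < 1.

(* 2/(1-q): the factor making the steps dominate 2|u|^(-q). *)
Definition stair_scale : R := 2 / (1 - q).

Definition stair_profile (x : R) : R :=
  if Rle_dec x 0 then 0 else Rpower (Rmin x K) (1 - q).

Definition stair_half (u : Z) : R := 1 + stair_scale * stair_profile (IZR u - 1).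

Definition stair (u : Z) : R :=
  if Z_le_dec 1 u then stair_half u else - stair_half (1 - u).

Definition stair_height : R := 1 + stair_scale * Rpower K (1 - q).

Definition stair_step (v : Z) : R :=
  stair_scale * (stair_profile (IZR v) - stair_profile (IZR v - 1)).

Lemma stair_scale_ge_2 : 2 <= stair_scale.
Proof.
  unfold stair_scale. apply Rmult_le_reg_r with (1 - q); [lra|].
  unfold Rdiv. rewrite Rmult_assoc, Rinv_l by lra. nra.
Qed.

Lemma stair_profile_nonneg (x : R) : 0 <= stair_profile x.
Proof. unfold stair_profile. destruct Rle_dec; [lra | left; apply Rpower_pos]. Qed.

Lemma stair_profile_monotone (x y : R) : x <= y -> stair_profile x <= stair_profile y.
Proof.
  intro Hxy. unfold stair_profile.
  destruct (Rle_dec x 0); destruct (Rle_dec y 0); try lra; try (left; apply Rpower_pos).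
  apply Rle_Rpower_l; [lra|]. split; [apply Rmin_pos; lra | apply Rle_min_compat_r; exact Hxy].
Qed.

Lemma stair_profile_le (x : R) : stair_profile x <= Rpower K (1 - q).
Proof.
  unfold stair_profile. destruct Rle_dec; [left; apply Rpower_pos|].
  apply Rle_Rpower_l; [lra|]. split; [apply Rmin_pos; lra | apply Rmin_r].
Qed.

Lemma stair_bounded (u : Z) : Rabs (stair u) <= stair_height.
Proof.
  assert (Hhalf : forall v, 1 <= stair_half v <= stair_height).
  { intro v. unfold stair_half, stair_height.
    generalize (stair_profile_nonneg (IZR v - 1)) (stair_profile_le (IZR v - 1)) stair_scale_ge_2.
    intros. split; nra. }
  unfold stair. destruct Z_le_dec.
  - generalize (Hhalf u). intro. rewrite Rabs_pos_eq; lra.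
  - generalize (Hhalf (1 - u)%Z). intro. rewrite Rabs_Ropp, Rabs_pos_eq; lra.
Qed.

Lemma stair_step_nonneg (v : Z) : 0 <= stair_step v.
Proof.
  unfold stair_step.
  generalize stair_scale_ge_2 (stair_profile_monotone (IZR v - 1) (IZR v) ltac:(lra)). nra.
Qed.

Lemma stair_step_dominates (v : Z) :
  (1 <= v)%Z -> IZR v <= K -> 2 * Rpower (IZR v) (- q) <= stair_step v.
Proof.
  intros Hv HvK. unfold stair_step, stair_profile.
  destruct (Rle_dec (IZR v) 0) as [Hv0|_]; [apply IZR_le in Hv; simpl in Hv; lra|].
  destruct (Z.eq_dec v 1) as [->|Hne].
  - destruct (Rle_dec (1 - 1) 0); [|lra].
    rewrite Rmin_left by lra. rewrite !Rpower_base_1. generalize stair_scale_ge_2. lra.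
  - assert (H2 : 2 <= IZR v) by (apply IZR_le; lia).
    destruct (Rle_dec (IZR v - 1) 0); [lra|].
    rewrite !Rmin_left by lra.
    generalize (rpower_increment_lower (IZR v) (1 - q) ltac:(lra) ltac:(lra)).
    replace (1 - q - 1) with (- q) by ring. intro Hinc.
    unfold stair_scale.
    replace (2 * Rpower (IZR v) (- q)) with (2 / (1 - q) * ((1 - q) * Rpower (IZR v) (- q)))
      by (field; lra).
    apply Rmult_le_compat_l; [left; apply Rdiv_lt_0_compat; lra | exact Hinc].
Qed.

Lemma stair_increment (u : Z) :
  stair (u + 1) - stair u =
  if Z_le_dec 1 u then stair_step u else if Z.eq_dec u 0 then 2 else stair_step (- u).
Proof.
  unfold stair, stair_step, stair_half.
  destruct (Z_le_dec 1 (u + 1)); destruct (Z_le_dec 1 u); try lia.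
  - rewrite plus_IZR. replace (IZR u + 1 - 1) with (IZR u) by ring. ring.
  - destruct (Z.eq_dec u 0) as [->|]; [|lia]. simpl.
    replace (1 - 1) with 0 by ring. unfold stair_profile. destruct (Rle_dec 0 0); [ring | lra].
  - destruct (Z.eq_dec u 0); [lia|].
    replace (1 - (u + 1))%Z with (- u)%Z by lia. rewrite minus_IZR, opp_IZR.
    replace (1 - IZR u - 1) with (- IZR u) by ring. ring.
Qed.

Lemma stair_monotone (u : Z) : 0 <= stair (u + 1) - stair u.
Proof.
  rewrite stair_increment.
  destruct Z_le_dec; [apply stair_step_nonneg|].
  destruct Z.eq_dec; [lra | apply stair_step_nonneg].
Qed.

End Staircase.

(* The three estimates, for abstract scales A (decay scale of G), A' (decay
   scale of F), K (end of the polynomial range of G), Mp (= M', end of the gap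
   of F), L (end of the flat range of F) and N, and a decay exponent q. *)
Section ConvolutionEstimates.

Variables (F G : Z -> C) (A A' K L N Mp c1 q : R).
Hypothesis HA : 0 < A.
Hypothesis HA' : 8 * A <= A'.
Hypothesis HK1 : 1 <= K.
Hypothesis HKMp : 2 * K <= Mp.
Hypothesis HMpL : Mp <= L.
Hypothesis HLN : 2 * L <= N.
Hypothesis Hc1 : 0 <= c1 <= 1.
Hypothesis Hq : 0 <= q < 1.
Hypothesis HF0 : F 0%Z = RtoC 1.
Hypothesis HFgap : forall t, 1 <= zabs t < Mp -> F t = RtoC 0.
Hypothesis HFmid : forall t, Mp <= zabs t <= L -> Cmod (F t) <= c1.
Hypothesis HFtail : forall t, L <= zabs t -> Cmod (F t) <= exp (- sqrt (zabs t / A')).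
Hypothesis HFjoin : exp (- sqrt (L / A')) <= c1.
Hypothesis HG0 : Cmod (G 0%Z) <= 2.
Hypothesis HGpoly : forall u, 0 < zabs u <= K -> Cmod (G u) <= 2 * Rpower (zabs u) (- q).
Hypothesis HGtail : forall u, K <= zabs u -> Cmod (G u) <= exp (- (1/2) * sqrt (zabs u / A)).

(* Off the origin, |F| <= c1: in the gap F vanishes, and beyond L its tail is
   below its value at L. *)
Lemma F_off_origin (t : Z) : t <> 0%Z -> Cmod (F t) <= c1.
Proof.
  intro Ht. generalize (zabs_ge_1 t Ht). intro Ht1.
  destruct (Rlt_le_dec (zabs t) Mp) as [Hlt|Hge].
  - rewrite HFgap by lra. rewrite Cmod_0. lra.
  - destruct (Rle_dec (zabs t) L) as [HleL|HgtL]; [apply HFmid; lra|].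
    eapply Rle_trans; [apply HFtail; lra|]. eapply Rle_trans; [|exact HFjoin].
    apply exp_monotone, Ropp_le_contravar, sqrt_le_1_alt.
    apply Rmult_le_compat_r; [left; apply Rinv_0_lt_compat; lra | lra].
Qed.

Lemma F_le_1 (t : Z) : Cmod (F t) <= 1.
Proof.
  destruct (Z.eq_dec t 0) as [->|Ht]; [rewrite HF0, Cmod_1; lra|].
  generalize (F_off_origin t Ht). lra.
Qed.

Lemma F_support (t : Z) : F t <> RtoC 0 -> t <> 0%Z -> Mp <= zabs t.
Proof.
  intros Hnz Ht. destruct (Rlt_le_dec (zabs t) Mp) as [Hlt|Hge]; [|exact Hge].
  exfalso. apply Hnz, HFgap. split; [apply zabs_ge_1; exact Ht | exact Hlt].
Qed.

Lemma G_tail_le_1 (u : Z) : K <= zabs u -> Cmod (G u) <= 1.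
Proof.
  intro Hu. eapply Rle_trans; [apply HGtail; exact Hu|].
  apply exp_nonpos_le_1. generalize (sqrt_pos (zabs u / A)). lra.
Qed.

Lemma G_le_2 (u : Z) : Cmod (G u) <= 2.
Proof.
  destruct (Z.eq_dec u 0) as [->|Hu]; [exact HG0|].
  generalize (zabs_ge_1 u Hu). intro Hu1.
  destruct (Rle_dec (zabs u) K) as [HuK|HuK].
  - eapply Rle_trans; [apply HGpoly; lra|].
    assert (Rpower (zabs u) (- q) <= 1).
    { rewrite <- (Rpower_O (zabs u)) by lra. apply Rle_Rpower; lra. }
    lra.
  - generalize (G_tail_le_1 u ltac:(lra)). lra.
Qed.

Lemma G_le_stair_step (u : Z) : zabs u <= K -> Cmod (G u) <= stair K q (u + 1) - stair K q u.
Proof.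
  intro Hu. rewrite stair_increment.
  destruct (Z_le_dec 1 u) as [Hpos|Hnpos].
  - assert (E : zabs u = IZR u) by (unfold zabs; apply Rabs_pos_eq, IZR_le; lia).
    eapply Rle_trans; [apply HGpoly; generalize (zabs_ge_1 u ltac:(lia)); lra|].
    rewrite E. apply (stair_step_dominates K q HK1 Hq); [exact Hpos | lra].
  - destruct (Z.eq_dec u 0) as [->|Hne]; [exact HG0|].
    assert (E : zabs u = IZR (- u))
      by (unfold zabs; rewrite opp_IZR, Rabs_left; [reflexivity | apply IZR_lt; lia]).
    eapply Rle_trans; [apply HGpoly; generalize (zabs_ge_1 u Hne); lra|].
    rewrite E. apply (stair_step_dominates K q HK1 Hq); [lia | lra].
Qed.

Definition conv_term (s t : Z) : C := Cmult (F t) (G (s - t)%Z).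

(* Near the origin only |t| >= Mp >= 2|s| contribute, so |s-t| >= |t|/2 and
   G(s-t) is in its tail: each term is at most near_const/(1+|t|)^2. *)
Definition near_const : R :=
  exp (- (1/4 * sqrt (Mp / (2 * A)))) * (decay_const (1/4) * (2 * A) ^ 3).

Lemma near_const_nonneg : 0 <= near_const.
Proof.
  unfold near_const. apply Rmult_le_pos; [left; apply exp_pos|].
  apply Rmult_le_pos; [left; apply decay_const_pos; lra | apply pow_le; lra].
Qed.

Lemma conv_term_near_origin (s t : Z) :
  zabs s <= K -> t <> 0%Z -> Cmod (conv_term s t) <= near_const / (1 + zabs t) ^ 2.
Proof.
  intros Hs Ht. apply le_div_square; [apply zabs_nonneg|].
  unfold conv_term. rewrite Cmod_mult.
  destruct (Ceq_dec (F t) (RtoC 0)) as [E|E].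
  { rewrite E, Cmod_0, !Rmult_0_l. apply near_const_nonneg. }
  assert (Ht1 := F_support t E Ht).
  assert (Hst : zabs t / 2 <= zabs (s - t)) by (generalize (zabs_sub_ge_l s t); lra).
  assert (HG := HGtail (s - t)%Z ltac:(lra)).
  replace (- (1/2) * sqrt (zabs (s - t) / A)) with (- (2 * (1/4) * sqrt (zabs (s - t) / A)))
    in HG by lra.
  assert (Htail := stretched_tail_bound (1/4) (zabs (s - t) / A) (Mp / (2 * A)) (2 * A) (zabs t)
    ltac:(lra) ltac:(lra) ltac:(lra)
    ltac:(apply div_le_div_cross; nra) ltac:(apply div_le_div_cross; nra)).
  assert (Hsq : 0 <= (1 + zabs t) ^ 2) by (apply pow_le; generalize (zabs_nonneg t); lra).
  apply Rle_trans with (1 * exp (- (2 * (1/4) * sqrt (zabs (s - t) / A))) * (1 + zabs t) ^ 2).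
  - apply Rmult_le_compat_r; [exact Hsq|].
    apply Rmult_le_compat; [apply Cmod_ge_0 | apply Cmod_ge_0 | apply F_le_1 | exact HG].
  - rewrite Rmult_1_l. exact Htail.
Qed.

Lemma conv_near_origin (s : Z) :
  zabs s <= K -> Cmod (Cminus (zconv F G s) (G s)) <= 8 * near_const.
Proof.
  intro Hs. assert (Hnc := near_const_nonneg).
  assert (Hdom : forall t, Cmod (conv_term s t) <= (near_const + 2) / (1 + zabs t) ^ 2).
  { intro t. destruct (Z.eq_dec t 0) as [->|Ht].
    - rewrite zabs_0. replace ((1 + 0) ^ 2) with 1 by ring. rewrite Rdiv_1_r.
      unfold conv_term. rewrite Cmod_mult, HF0, Cmod_1, Rmult_1_l.
      generalize (G_le_2 (s - 0)%Z). lra.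
    - eapply Rle_trans; [apply conv_term_near_origin; assumption|].
      unfold Rdiv. apply Rmult_le_compat_r; [|lra].
      left. apply Rinv_0_lt_compat, pow_lt. generalize (zabs_nonneg t). lra. }
  assert (Hcentre : G s = conv_term s 0%Z)
    by (unfold conv_term; rewrite HF0, Z.sub_0_r, Cmult_1_l; reflexivity).
  unfold zconv. fold (conv_term s). rewrite Hcentre.
  rewrite (zsum_remove_origin _ _ (4 * (near_const + 2)) Hdom
    (fun t => inv_square_weight_nonneg (near_const + 2) t ltac:(lra))
    (fun N => zpartial_inv_square_scaled (near_const + 2) N ltac:(lra))).
  replace (8 * near_const) with (2 * (4 * near_const)) by ring.
  apply zsum_Cmod_le with (w := fun t => near_const / (1 + zabs t) ^ 2).
  - intro t. destruct (Z.eqb_spec t 0) as [_|Ht].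
    + rewrite Cmod_0. apply inv_square_weight_nonneg. exact Hnc.
    + apply conv_term_near_origin; assumption.
  - intro t. apply inv_square_weight_nonneg. exact Hnc.
  - intro M. apply zpartial_inv_square_scaled. exact Hnc.
Qed.

(* In the intermediate range K < |s| <= N the terms are split by the position
   of s - t and of t: the local part (|s-t| <= K) is handled by the staircase,
   the rest by mid_const/(1+|t|)^2. *)
Definition mid_const : R :=
  9 * N ^ 2 * exp (- (1/2 * sqrt (K / A)))
  + exp (- (1/2 * sqrt (N / A'))) * (decay_const (1/2) * A' ^ 3).

(* |s-t| <= K: then t != 0, so |F t| <= c1, and G(s-t) is a staircase step. *)
Lemma conv_term_mid_local (s t : Z) :
  K < zabs s -> zabs (s - t) <= K ->
  Cmod (conv_term s t) <= c1 * (stair K q (s - t + 1) - stair K q (s - t)).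
Proof.
  intros Hs Hst.
  assert (Ht : t <> 0%Z) by (intro E; subst t; rewrite Z.sub_0_r in Hst; lra).
  unfold conv_term. rewrite Cmod_mult.
  apply Rmult_le_compat; [apply Cmod_ge_0 | apply Cmod_ge_0 | |].
  - apply F_off_origin. exact Ht.
  - apply G_le_stair_step. exact Hst.
Qed.

(* |s-t| > K and |t| <= 2N: G(s-t) <= exp(-sqrt(K/A)/2) and (1+|t|)^2 <= 9N^2. *)
Lemma conv_term_mid_moderate (s t : Z) :
  K < zabs (s - t) -> zabs t <= 2 * N ->
  Cmod (conv_term s t) <= 9 * N ^ 2 * exp (- (1/2 * sqrt (K / A))) / (1 + zabs t) ^ 2.
Proof.
  intros Hst Ht. apply le_div_square; [apply zabs_nonneg|].
  unfold conv_term. rewrite Cmod_mult.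
  assert (HG : Cmod (G (s - t)%Z) <= exp (- (1/2 * sqrt (K / A)))).
  { eapply Rle_trans; [apply HGtail; lra|]. apply exp_monotone.
    assert (sqrt (K / A) <= sqrt (zabs (s - t) / A))
      by (apply sqrt_le_1_alt, div_le_compat_r; lra).
    lra. }
  assert (Hsq : (1 + zabs t) ^ 2 <= 9 * N ^ 2).
  { generalize (zabs_nonneg t). intro.
    apply Rle_trans with ((3 * N) ^ 2); [apply pow_incr; lra | right; ring]. }
  assert (He : 0 <= exp (- (1/2 * sqrt (K / A)))) by (left; apply exp_pos).
  apply Rle_trans with (1 * exp (- (1/2 * sqrt (K / A))) * (9 * N ^ 2)).
  - apply Rmult_le_compat; [|apply pow_le; generalize (zabs_nonneg t); lra| |exact Hsq].
    + apply Rmult_le_pos; apply Cmod_ge_0.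
    + apply Rmult_le_compat; [apply Cmod_ge_0 | apply Cmod_ge_0 | apply F_le_1 | exact HG].
  - right. ring.
Qed.

(* |s-t| >= K and |t| > 2N: F(t) is in its tail, with a gain from |t| >= N. *)
Lemma conv_term_mid_remote (s t : Z) :
  K <= zabs (s - t) -> 2 * N < zabs t ->
  Cmod (conv_term s t)
    <= exp (- (1/2 * sqrt (N / A'))) * (decay_const (1/2) * A' ^ 3) / (1 + zabs t) ^ 2.
Proof.
  intros Hst Ht. apply le_div_square; [apply zabs_nonneg|].
  unfold conv_term. rewrite Cmod_mult.
  assert (HF := HFtail t ltac:(lra)).
  replace (- sqrt (zabs t / A')) with (- (2 * (1/2) * sqrt (zabs t / A'))) in HF by lra.
  assert (Htail := stretched_tail_bound (1/2) (zabs t / A') (N / A') A' (zabs t)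
    ltac:(lra) ltac:(lra) ltac:(lra) ltac:(apply div_le_compat_r; lra) (Rle_refl _)).
  apply Rle_trans with (exp (- (2 * (1/2) * sqrt (zabs t / A'))) * 1 * (1 + zabs t) ^ 2).
  - apply Rmult_le_compat_r; [apply pow_le; generalize (zabs_nonneg t); lra|].
    apply Rmult_le_compat; [apply Cmod_ge_0 | apply Cmod_ge_0 | exact HF |].
    apply G_tail_le_1. exact Hst.
  - rewrite Rmult_1_r. exact Htail.
Qed.

(* Estimate (b) before comparison with the target: the staircase part
   telescopes to at most 2 c1 stair_height, the rest has mass 4 mid_const. *)
Lemma conv_intermediate (s : Z) :
  K < zabs s <= N ->
  Cmod (zconv F G s) <= 2 * (2 * c1 * stair_height K q + 4 * mid_const).
Proof.
  intro Hs.
  assert (Hmod0 : 0 <= 9 * N ^ 2 * exp (- (1/2 * sqrt (K / A)))).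
  { apply Rmult_le_pos; [apply Rmult_le_pos; [lra | apply pow_le; lra] | left; apply exp_pos]. }
  assert (Hrem0 : 0 <= exp (- (1/2 * sqrt (N / A'))) * (decay_const (1/2) * A' ^ 3)).
  { apply Rmult_le_pos; [left; apply exp_pos|].
    apply Rmult_le_pos; [left; apply decay_const_pos; lra | apply pow_le; lra]. }
  assert (Hmc : 0 <= mid_const) by (unfold mid_const; lra).
  set (step := fun t => c1 * (stair K q (s - t + 1) - stair K q (s - t))).
  assert (Hstep : forall t, 0 <= step t).
  { intro t. unfold step. apply Rmult_le_pos; [lra | apply stair_monotone; assumption]. }
  assert (Hdom : forall t, Cmod (conv_term s t) <= step t + mid_const / (1 + zabs t) ^ 2).
  { intro t. generalize (Hstep t) (inv_square_weight_nonneg mid_const t Hmc). intros H1 H2.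
    destruct (Rle_dec (zabs (s - t)) K) as [Hloc|Hfar].
    - generalize (conv_term_mid_local s t ltac:(lra) Hloc). unfold step. lra.
    - enough (Cmod (conv_term s t) <= mid_const / (1 + zabs t) ^ 2) by lra.
      unfold mid_const. rewrite Rdiv_plus_distr.
      generalize (inv_square_weight_nonneg _ t Hmod0) (inv_square_weight_nonneg _ t Hrem0).
      intros Hm Hr.
      destruct (Rle_dec (zabs t) (2 * N)) as [Hmod|Hrem].
      + generalize (conv_term_mid_moderate s t ltac:(lra) Hmod). lra.
      + generalize (conv_term_mid_remote s t ltac:(lra) ltac:(lra)). lra. }
  unfold zconv. fold (conv_term s).
  apply zsum_Cmod_le with (w := fun t => step t + mid_const / (1 + zabs t) ^ 2).
  - exact Hdom.
  - intro t. generalize (Hstep t) (inv_square_weight_nonneg mid_const t Hmc). lra.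
  - intro M. rewrite zpartial_plus. unfold step. rewrite zpartial_scal, zpartial_telescope.
    generalize (zpartial_inv_square_scaled mid_const M Hmc).
    generalize (proj1 (Rabs_le_between _ _) (stair_bounded K q HK1 Hq (s + Z.of_nat M + 2)))
      (proj1 (Rabs_le_between _ _) (stair_bounded K q HK1 Hq (s - Z.of_nat M))).
    intros Hhi Hlo Hmid.
    assert (c1 * (stair K q (s + Z.of_nat M + 2) - stair K q (s - Z.of_nat M))
            <= c1 * (2 * stair_height K q)) by (apply Rmult_le_compat_l; lra).
    lra.
Qed.

(* Far away, |s| > N, one of |t|, |s-t| is at least |s|/2, and the
   corresponding factor supplies exp(-sqrt(|s|/A')/2) together with a gain. *)
Definition far_const : R :=
  2 * exp (- (1/10 * sqrt (N / A'))) * (decay_const (1/10) * A' ^ 3)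
  + exp (- (1/8 * sqrt (N / A'))) * (decay_const (1/8) * (2 * A) ^ 3).

(* |t| >= |s|/2: the tail of F supplies the decay. *)
Lemma conv_term_far_large_t (s t : Z) :
  N < zabs s -> zabs s / 2 <= zabs t ->
  Cmod (conv_term s t)
    <= exp (- (1/2) * sqrt (zabs s / A'))
       * (2 * exp (- (1/10 * sqrt (N / A'))) * (decay_const (1/10) * A' ^ 3))
       / (1 + zabs t) ^ 2.
Proof.
  intros Hs Ht. apply le_div_square; [apply zabs_nonneg|].
  unfold conv_term. rewrite Cmod_mult.
  set (z := sqrt (zabs s / A')). set (y := sqrt (zabs t / A')). set (z0 := sqrt (N / A')).
  assert (Hz0 : z0 <= z) by (apply sqrt_le_1_alt, div_le_compat_r; lra).
  assert (Hz00 : 0 <= z0) by apply sqrt_pos.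
  assert (Hyz : 2/3 * z <= y).
  { apply sqrt_scaled_le; [lra | apply Rdiv_le_0_compat; [apply zabs_nonneg | lra] |].
    replace ((2/3) ^ 2 * (zabs s / A')) with ((4/9 * zabs s) / A') by (field; lra).
    apply div_le_compat_r; lra. }
  assert (HF : Cmod (F t) <= exp (- (1/2) * z) * exp (- (1/10 * z0)) * exp (- (1/10 * y))).
  { eapply Rle_trans; [apply HFtail; lra|]. rewrite <- !exp_plus. apply exp_monotone.
    fold y. lra. }
  assert (Hdecay := exp_sqrt_beats_square (1/10) (zabs t / A') A' (zabs t)
    ltac:(lra) ltac:(lra) ltac:(lra) (Rle_refl _)).
  fold y in Hdecay.
  assert (He : 0 <= exp (- (1/2) * z) * exp (- (1/10 * z0))).
  { apply Rmult_le_pos; left; apply exp_pos. }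
  assert (Hsq : 0 <= (1 + zabs t) ^ 2) by (apply pow_le; generalize (zabs_nonneg t); lra).
  apply Rle_trans
    with (exp (- (1/2) * z) * exp (- (1/10 * z0)) * exp (- (1/10 * y)) * 2 * (1 + zabs t) ^ 2).
  - apply Rmult_le_compat_r; [exact Hsq|].
    apply Rmult_le_compat; [apply Cmod_ge_0 | apply Cmod_ge_0 | exact HF | apply G_le_2].
  - replace (exp (- (1/2) * z) * exp (- (1/10 * z0)) * exp (- (1/10 * y)) * 2 * (1 + zabs t) ^ 2)
      with (exp (- (1/2) * z) * (2 * exp (- (1/10 * z0)))
            * (exp (- (1/10 * y)) * (1 + zabs t) ^ 2)) by ring.
    replace (exp (- (1/2) * z) * (2 * exp (- (1/10 * z0)) * (decay_const (1/10) * A' ^ 3)))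
      with (exp (- (1/2) * z) * (2 * exp (- (1/10 * z0))) * (decay_const (1/10) * A' ^ 3))
      by ring.
    apply Rmult_le_compat_l; [nra | exact Hdecay].
Qed.

(* |t| < |s|/2: then |s-t| >= |s|/2, and the tail of G, on the finer scale
   A <= A'/8, supplies the decay. *)
Lemma conv_term_far_small_t (s t : Z) :
  N < zabs s -> zabs t < zabs s / 2 ->
  Cmod (conv_term s t)
    <= exp (- (1/2) * sqrt (zabs s / A'))
       * (exp (- (1/8 * sqrt (N / A'))) * (decay_const (1/8) * (2 * A) ^ 3))
       / (1 + zabs t) ^ 2.
Proof.
  intros Hs Ht. apply le_div_square; [apply zabs_nonneg|].
  unfold conv_term. rewrite Cmod_mult.
  assert (Hst : zabs s / 2 <= zabs (s - t)) by (generalize (zabs_sub_ge_r s t); lra).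
  set (z := sqrt (zabs s / A')). set (w := sqrt (zabs (s - t) / A)). set (z0 := sqrt (N / A')).
  assert (Hz0 : z0 <= z) by (apply sqrt_le_1_alt, div_le_compat_r; lra).
  assert (Hz00 : 0 <= z0) by apply sqrt_pos.
  assert (Hwz : 2 * z <= w).
  { apply sqrt_scaled_le; [lra | apply Rdiv_le_0_compat; [apply zabs_nonneg | lra] |].
    replace (2 ^ 2 * (zabs s / A')) with ((4 * zabs s) / A') by (field; lra).
    apply div_le_div_cross; [lra | lra |]. generalize (zabs_nonneg s). nra. }
  assert (HG : Cmod (G (s - t)%Z) <= exp (- (1/2) * z) * exp (- (1/8 * z0)) * exp (- (1/8 * w))).
  { eapply Rle_trans; [apply HGtail; lra|]. rewrite <- !exp_plus. apply exp_monotone.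
    fold w. lra. }
  assert (Hdecay := exp_sqrt_beats_square (1/8) (zabs (s - t) / A) (2 * A) (zabs s)
    ltac:(lra) ltac:(lra) ltac:(lra)
    ltac:(apply div_le_div_cross; [lra | lra | generalize (zabs_nonneg s); nra])).
  fold w in Hdecay.
  assert (He : 0 <= exp (- (1/2) * z) * exp (- (1/8 * z0))).
  { apply Rmult_le_pos; left; apply exp_pos. }
  assert (Hts : (1 + zabs t) ^ 2 <= (1 + zabs s) ^ 2)
    by (apply pow_incr; generalize (zabs_nonneg t); lra).
  apply Rle_trans
    with (1 * (exp (- (1/2) * z) * exp (- (1/8 * z0)) * exp (- (1/8 * w))) * (1 + zabs s) ^ 2).
  - apply Rmult_le_compat; [apply Rmult_le_pos; apply Cmod_ge_0
                           | apply pow_le; generalize (zabs_nonneg t); lra | | exact Hts].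
    apply Rmult_le_compat; [apply Cmod_ge_0 | apply Cmod_ge_0 | apply F_le_1 | exact HG].
  - replace (1 * (exp (- (1/2) * z) * exp (- (1/8 * z0)) * exp (- (1/8 * w))) * (1 + zabs s) ^ 2)
      with (exp (- (1/2) * z) * exp (- (1/8 * z0)) * (exp (- (1/8 * w)) * (1 + zabs s) ^ 2))
      by ring.
    replace (exp (- (1/2) * z) * (exp (- (1/8 * z0)) * (decay_const (1/8) * (2 * A) ^ 3)))
      with (exp (- (1/2) * z) * exp (- (1/8 * z0)) * (decay_const (1/8) * (2 * A) ^ 3))
      by ring.
    apply Rmult_le_compat_l; [exact He | exact Hdecay].
Qed.

Lemma conv_far (s : Z) :
  N < zabs s ->
  Cmod (zconv F G s) <= 8 * far_const * exp (- (1/2) * sqrt (zabs s / A')).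
Proof.
  intro Hs.
  set (E := exp (- (1/2) * sqrt (zabs s / A'))).
  assert (HE : 0 < E) by apply exp_pos.
  assert (Hlarge : 0 <= 2 * exp (- (1/10 * sqrt (N / A'))) * (decay_const (1/10) * A' ^ 3)).
  { apply Rmult_le_pos; [apply Rmult_le_pos; [lra | left; apply exp_pos]|].
    apply Rmult_le_pos; [left; apply decay_const_pos; lra | apply pow_le; lra]. }
  assert (Hsmall : 0 <= exp (- (1/8 * sqrt (N / A'))) * (decay_const (1/8) * (2 * A) ^ 3)).
  { apply Rmult_le_pos; [left; apply exp_pos|].
    apply Rmult_le_pos; [left; apply decay_const_pos; lra | apply pow_le; lra]. }
  assert (HB : 0 <= E * far_const) by (unfold far_const; nra).
  assert (Hdom : forall t, Cmod (conv_term s t) <= E * far_const / (1 + zabs t) ^ 2).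
  { intro t. unfold far_const. rewrite Rmult_plus_distr_l, Rdiv_plus_distr.
    generalize (inv_square_weight_nonneg (E * (2 * exp (- (1/10 * sqrt (N / A')))
                                               * (decay_const (1/10) * A' ^ 3))) t ltac:(nra))
      (inv_square_weight_nonneg (E * (exp (- (1/8 * sqrt (N / A')))
                                      * (decay_const (1/8) * (2 * A) ^ 3))) t ltac:(nra)).
    intros H1 H2.
    destruct (Rle_lt_dec (zabs s / 2) (zabs t)) as [Ht|Ht].
    - generalize (conv_term_far_large_t s t Hs Ht). fold E. lra.
    - generalize (conv_term_far_small_t s t Hs Ht). fold E. lra. }
  unfold zconv. fold (conv_term s).
  replace (8 * far_const * E) with (2 * (4 * (E * far_const))) by ring.
  apply zsum_Cmod_le with (w := fun t => E * far_const / (1 + zabs t) ^ 2).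
  - exact Hdom.
  - intro t. apply inv_square_weight_nonneg. exact HB.
  - intro M. apply zpartial_inv_square_scaled. exact HB.
Qed.

End ConvolutionEstimates.

Lemma Rpower_zero_exponent (x : R) : Rpower x 0 = 1.
Proof. unfold Rpower. rewrite Rmult_0_l. apply exp_0. Qed.

Lemma Rpower_ge_1 (x a : R) : 1 <= x -> 0 <= a -> 1 <= Rpower x a.
Proof. intros Hx Ha. rewrite <- (Rpower_zero_exponent x). apply Rle_Rpower; assumption. Qed.

Lemma Rpower_antitone (x y e : R) : 0 < x <= y -> e <= 0 -> Rpower y e <= Rpower x e.
Proof.
  intros Hxy He. replace e with (- (- e)) by ring.
  rewrite (Rpower_Ropp y (- e)), (Rpower_Ropp x (- e)).
  apply Rinv_le_contravar; [apply Rpower_pos | apply Rle_Rpower_l; lra].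
Qed.

Lemma Rpower_div (x a c : R) : Rpower x a / Rpower x c = Rpower x (a - c).
Proof. unfold Rminus. rewrite Rpower_plus, Rpower_Ropp. reflexivity. Qed.

Lemma sqrt_Rpower (x a : R) : sqrt (Rpower x a) = Rpower x (a / 2).
Proof. rewrite <- Rpower_sqrt by apply Rpower_pos. rewrite Rpower_mult. f_equal. Qed.

Lemma Rpower_pow_nat (x a : R) (n : nat) : Rpower x a ^ n = Rpower x (INR n * a).
Proof. rewrite <- Rpower_pow by apply Rpower_pos. rewrite Rpower_mult. f_equal. ring. Qed.

Lemma sqrt_Rpower_ratio (x a c : R) : sqrt (Rpower x a / Rpower x c) = Rpower x ((a - c) / 2).
Proof. rewrite Rpower_div. apply sqrt_Rpower. Qed.

Section Scales.

Variables (tau2 b eps Ceps : R).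
Hypothesis Htau2 : 2 <= tau2.
Hypothesis Hb : tau2 < b.
Hypothesis Heps : 0 < eps.
Hypothesis Hdelta : 0 < (b * (1 - eps) - tau2 * (1 + eps) ^ 2)
                        / (tau2 * (b - 1) * (1 + eps)) - eps.
Hypothesis HC : 0 < Ceps.

(* delta, the exponent of the target in (a), and q = delta - eps, the decay
   exponent of G. *)
Definition target_exponent : R :=
  (b * (1 - eps) - tau2 * (1 + eps) ^ 2) / (tau2 * (b - 1) * (1 + eps)).

Definition profile_exponent : R := target_exponent - eps.

Lemma target_exponent_numerator_pos :
  0 < b * (1 - eps) - tau2 * (1 + eps) ^ 2 /\
  target_exponent * (tau2 * (b - 1) * (1 + eps)) = b * (1 - eps) - tau2 * (1 + eps) ^ 2.
Proof.
  assert (Hden : 0 < tau2 * (b - 1) * (1 + eps))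
    by (apply Rmult_lt_0_compat; [apply Rmult_lt_0_compat|]; lra).
  assert (Hprod : target_exponent * (tau2 * (b - 1) * (1 + eps))
                  = b * (1 - eps) - tau2 * (1 + eps) ^ 2)
    by (unfold target_exponent; field; lra).
  split; [|exact Hprod].
  change (0 < target_exponent - eps) in Hdelta. nra.
Qed.

Lemma eps_lt_1 : eps < 1.
Proof.
  destruct target_exponent_numerator_pos as [Hnum _].
  destruct (Rlt_le_dec eps 1) as [Hlt|Hge]; [exact Hlt|]. exfalso. nra.
Qed.

Lemma K_exponent_below_b : tau2 * (1 + eps) < b.
Proof.
  destruct target_exponent_numerator_pos as [Hnum _].
  assert (tau2 * (1 + eps) ^ 2 >= tau2 * (1 + eps)) by nra.
  nra.
Qed.

Lemma profile_exponent_range : 0 <= profile_exponent < 1.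
Proof.
  destruct target_exponent_numerator_pos as [Hnum Hprod].
  assert (Hden : 0 < tau2 * (b - 1) * (1 + eps))
    by (apply Rmult_lt_0_compat; [apply Rmult_lt_0_compat|]; lra).
  assert (Hlt : b * (1 - eps) - tau2 * (1 + eps) ^ 2 < tau2 * (b - 1) * (1 + eps)).
  { assert (tau2 * (1 + eps) ^ 2 >= tau2) by nra.
    assert (tau2 * (b - 1) * (1 + eps) >= tau2 * (b - 1)) by nra.
    nra. }
  unfold profile_exponent. split; [exact (Rlt_le _ _ Hdelta)|].
  assert (target_exponent < 1) by (apply Rmult_lt_reg_r with (tau2 * (b - 1) * (1 + eps)); lra).
  lra.
Qed.

(* The exponent of c1 K^(1-q) lies strictly below that of N^(-q); this is
   exactly the inequality delta > eps encoded in the definition of delta. *)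
Lemma exponent_gap :
  b * (-1 + eps) + tau2 * (1 + eps) * (1 - profile_exponent)
  < - (b * (tau2 * (1 + eps)) * profile_exponent).
Proof.
  destruct target_exponent_numerator_pos as [_ Hprod].
  assert (0 < b * tau2 * (1 + eps) * eps) by (repeat apply Rmult_lt_0_compat; lra).
  unfold profile_exponent. nra.
Qed.

Definition scales_admissible (M : R) : Prop :=
  8 * Rpower M tau2 <= Rpower (Rpower M b) tau2 /\
  1 <= Rpower M (tau2 * (1 + eps)) /\
  2 * Rpower M (tau2 * (1 + eps)) <= Rpower M b /\
  Rpower M b <= Rpower (Rpower M b) (tau2 * (1 + eps / 2)) /\
  2 * Rpower (Rpower M b) (tau2 * (1 + eps / 2)) <= Rpower (Rpower M b) (tau2 * (1 + eps)) /\
  0 <= Ceps * Rpower (Rpower M b) (-1 + eps) <= 1 /\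
  exp (- sqrt (Rpower (Rpower M b) (tau2 * (1 + eps / 2)) / Rpower (Rpower M b) tau2))
    <= Ceps * Rpower (Rpower M b) (-1 + eps).

Lemma scales_admissible_eventually : Rbar_locally p_infty scales_admissible.
Proof.
  assert (He1 := eps_lt_1).
  assert (Hg : 0 < b * tau2 * eps / 4)
    by (apply Rdiv_lt_0_compat; [repeat apply Rmult_lt_0_compat|]; lra).
  generalize (filter_and (F := Rbar_locally p_infty) _ _ eventually_ge_1
    (filter_and (F := Rbar_locally p_infty) _ _ (pow_dominates tau2 (b * tau2) 8 ltac:(nra))
    (filter_and (F := Rbar_locally p_infty) _ _
      (pow_dominates (tau2 * (1 + eps)) b 2 K_exponent_below_b)
    (filter_and (F := Rbar_locally p_infty) _ _
      (pow_dominates (b * (tau2 * (1 + eps / 2))) (b * (tau2 * (1 + eps))) 2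
                       ltac:(nra))
    (filter_and (F := Rbar_locally p_infty) _ _ (pow_dominates (b * (-1 + eps)) 0 Ceps ltac:(nra))
      (stretched_exp_negligible (/ Ceps) 0 (b * (-1 + eps)) 1 (b * tau2 * eps / 4)
         ltac:(apply Rinv_0_lt_compat; lra) ltac:(lra) Hg)))))).
  apply filter_imp. intros M [HM1 [H8A [H2K [H2L [Hc1 Hjoin]]]]].
  unfold scales_admissible. rewrite !Rpower_mult.
  rewrite Rpower_zero_exponent in Hc1, Hjoin. rewrite Rmult_1_r in Hjoin.
  assert (Hc1pos : 0 < Ceps * Rpower M (b * (-1 + eps)))
    by (apply Rmult_lt_0_compat; [lra | apply Rpower_pos]).
  split; [exact H8A|]. split; [apply Rpower_ge_1; nra|].
  split; [exact H2K|]. split; [apply Rle_Rpower; nra|].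
  split; [exact H2L|]. split; [lra|].
  rewrite sqrt_Rpower_ratio.
  replace ((b * (tau2 * (1 + eps / 2)) - b * tau2) / 2) with (b * tau2 * eps / 4) by field.
  rewrite Rmult_1_l in Hjoin.
  apply Rmult_le_reg_l with (/ Ceps); [apply Rinv_0_lt_compat; lra|].
  rewrite <- Rmult_assoc, Rinv_l, Rmult_1_l by lra. exact Hjoin.
Qed.

Lemma sqrt_K_over_A (M : R) :
  sqrt (Rpower M (tau2 * (1 + eps)) / Rpower M tau2) = Rpower M (tau2 * eps / 2).
Proof. rewrite sqrt_Rpower_ratio. f_equal. field. Qed.

Lemma sqrt_N_over_A' (M : R) :
  sqrt (Rpower (Rpower M b) (tau2 * (1 + eps)) / Rpower (Rpower M b) tau2)
  = Rpower M (b * tau2 * eps / 2).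
Proof. rewrite !Rpower_mult, sqrt_Rpower_ratio. f_equal. field. Qed.

Lemma cube_Rpower (x a : R) : Rpower x a ^ 3 = Rpower x (3 * a).
Proof. rewrite Rpower_pow_nat. f_equal. simpl. ring. Qed.

(* For M large the error of (a) is below M'^(-delta): the gain
   sqrt(M'/(2A)) >= M^((b-tau2)/2)/2 beats the polynomial factor A^3. *)
Definition near_error_small (M : R) : Prop :=
  8 * near_const (Rpower M tau2) (Rpower M b) <= Rpower (Rpower M b) (- target_exponent).

Lemma near_error_small_eventually : Rbar_locally p_infty near_error_small.
Proof.
  unfold near_error_small.
  assert (HD := decay_const_pos (1/4) ltac:(lra)).
  apply (filter_imp (fun M => 64 * decay_const (1/4) * Rpower M (3 * tau2)
           * exp (- (1/8 * Rpower M ((b - tau2) / 2))) <= Rpower M (b * - target_exponent))).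
  2: { apply stretched_exp_negligible; lra. }
  intros M HM. rewrite Rpower_mult. eapply Rle_trans; [|exact HM].
  unfold near_const.
  assert (Hratio : Rpower M b / (2 * Rpower M tau2) = Rpower M (b - tau2) / 2).
  { rewrite <- Rpower_div. field. apply Rgt_not_eq, Rpower_pos. }
  assert (Hsqrt : 1/2 * Rpower M ((b - tau2) / 2) <= sqrt (Rpower M b / (2 * Rpower M tau2))).
  { rewrite Hratio, <- sqrt_Rpower. apply sqrt_scaled_le; [lra | left; apply Rpower_pos|].
    generalize (Rpower_pos M (b - tau2)). lra. }
  assert (Hexp : exp (- (1/4 * sqrt (Rpower M b / (2 * Rpower M tau2))))
                 <= exp (- (1/8 * Rpower M ((b - tau2) / 2)))) by (apply exp_monotone; lra).
  rewrite Rpow_mult_distr, cube_Rpower.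
  replace (8 * (exp (- (1/4 * sqrt (Rpower M b / (2 * Rpower M tau2))))
                * (decay_const (1/4) * (2 ^ 3 * Rpower M (3 * tau2)))))
    with (64 * decay_const (1/4) * Rpower M (3 * tau2)
          * exp (- (1/4 * sqrt (Rpower M b / (2 * Rpower M tau2))))) by ring.
  apply Rmult_le_compat_l; [|exact Hexp].
  generalize (Rpower_pos M (3 * tau2)). nra.
Qed.

(* For M large the error of (b) is below N^(-q): the staircase part by
   exponent_gap, the tails by their stretched-exponential gains. *)
Definition mid_error_small (M : R) : Prop :=
  2 * (2 * (Ceps * Rpower (Rpower M b) (-1 + eps))
         * stair_height (Rpower M (tau2 * (1 + eps))) profile_exponent
       + 4 * mid_const (Rpower M tau2) (Rpower (Rpower M b) tau2) (Rpower M (tau2 * (1 + eps)))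
                       (Rpower (Rpower M b) (tau2 * (1 + eps))))
  <= Rpower (Rpower (Rpower M b) (tau2 * (1 + eps))) (- profile_exponent).

Lemma mid_error_small_eventually : Rbar_locally p_infty mid_error_small.
Proof.
  unfold mid_error_small.
  destruct (profile_exponent_range) as [Hq0 Hq1].
  set (q := profile_exponent) in *.
  set (e := - (b * (tau2 * (1 + eps)) * q)).
  assert (Hcc : 0 < stair_scale q) by (apply Rdiv_lt_0_compat; lra).
  assert (HD := decay_const_pos (1/2) ltac:(lra)).
  assert (Hg1 : 0 < tau2 * eps / 2) by (apply Rdiv_lt_0_compat; [apply Rmult_lt_0_compat|]; lra).
  assert (Hg2 : 0 < b * tau2 * eps / 2)
    by (apply Rdiv_lt_0_compat; [repeat apply Rmult_lt_0_compat|]; lra).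
  generalize (filter_and (F := Rbar_locally p_infty) _ _ eventually_ge_1
    (filter_and (F := Rbar_locally p_infty) _ _
      (pow_dominates (b * (-1 + eps) + tau2 * (1 + eps) * (1 - q)) e (8 * Ceps * (1 + stair_scale q))
         exponent_gap)
    (filter_and (F := Rbar_locally p_infty) _ _
      (stretched_exp_negligible (4 * 72) (2 * (b * (tau2 * (1 + eps)))) e (1/2) (tau2 * eps / 2)
         ltac:(lra) ltac:(lra) Hg1)
      (stretched_exp_negligible (4 * 8 * decay_const (1/2)) (3 * (b * tau2)) e (1/2)
         (b * tau2 * eps / 2) ltac:(nra) ltac:(lra) Hg2)))).
  apply filter_imp. intros M [HM1 [Hheight [Hmoderate Hremote]]].
  unfold mid_const. rewrite sqrt_K_over_A, sqrt_N_over_A', !Rpower_mult, Rpower_pow_nat, cube_Rpower.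
  replace (b * (tau2 * (1 + eps)) * - q) with e by (unfold e; ring).
  replace (INR 2 * (b * (tau2 * (1 + eps)))) with (2 * (b * (tau2 * (1 + eps)))) by (simpl; ring).
  assert (Hstair : stair_height (Rpower M (tau2 * (1 + eps))) q
                   <= (1 + stair_scale q) * Rpower M (tau2 * (1 + eps) * (1 - q))).
  { unfold stair_height. rewrite Rpower_mult.
    assert (1 <= Rpower M (tau2 * (1 + eps) * (1 - q))) by (apply Rpower_ge_1; nra).
    nra. }
  assert (Hc1 : 0 <= Ceps * Rpower M (b * (-1 + eps)))
    by (apply Rmult_le_pos; [lra | left; apply Rpower_pos]).
  assert (Hprod : Ceps * Rpower M (b * (-1 + eps)) * stair_height (Rpower M (tau2 * (1 + eps))) q
                  <= Rpower M e / 8).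
  { eapply Rle_trans; [apply Rmult_le_compat_l; [exact Hc1 | exact Hstair]|].
    rewrite Rpower_plus in Hheight. lra. }
  lra.
Qed.

Definition far_error_small (M : R) : Prop :=
  8 * far_const (Rpower M tau2) (Rpower (Rpower M b) tau2)
                (Rpower (Rpower M b) (tau2 * (1 + eps))) <= 1.

Lemma far_error_small_eventually : Rbar_locally p_infty far_error_small.
Proof.
  unfold far_error_small.
  assert (Hg : 0 < b * tau2 * eps / 2)
    by (apply Rdiv_lt_0_compat; [repeat apply Rmult_lt_0_compat|]; lra).
  assert (HD10 := decay_const_pos (1/10) ltac:(lra)).
  assert (HD8 := decay_const_pos (1/8) ltac:(lra)).
  generalize (filter_and (F := Rbar_locally p_infty) _ _
    (stretched_exp_negligible (32 * decay_const (1/10)) (3 * (b * tau2)) 0 (1/10)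
       (b * tau2 * eps / 2) ltac:(lra) ltac:(lra) Hg)
    (stretched_exp_negligible (128 * decay_const (1/8)) (3 * tau2) 0 (1/8)
       (b * tau2 * eps / 2) ltac:(lra) ltac:(lra) Hg)).
  apply filter_imp. intros M [Hlarge Hsmall].
  rewrite Rpower_zero_exponent in Hlarge, Hsmall.
  unfold far_const. rewrite sqrt_N_over_A', Rpower_mult, Rpow_mult_distr, !cube_Rpower.
  lra.
Qed.

Definition large_scale (M : R) : Prop :=
  scales_admissible M /\ near_error_small M /\ mid_error_small M /\ far_error_small M.

Lemma large_scale_eventually : Rbar_locally p_infty large_scale.
Proof.
  unfold large_scale. apply filter_and; [exact scales_admissible_eventually|].
  apply filter_and; [exact near_error_small_eventually|].
  apply filter_and; [exact mid_error_small_eventually | exact far_error_small_eventually].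
Qed.

End Scales.

Theorem lemma7 (tau2 b eps Ceps : R)
  (Htau2 : 2 <= tau2) (Hb : tau2 < b) (Heps : 0 < eps)
  (Hdelta : 0 < (b * (1 - eps) - tau2 * (1 + eps) ^ 2)
                  / (tau2 * (b - 1) * (1 + eps)) - eps)
  (HC : 0 < Ceps) :
  let delta := (b * (1 - eps) - tau2 * (1 + eps) ^ 2)
                 / (tau2 * (b - 1) * (1 + eps)) in
  exists Mstar : R, 0 < Mstar /\
  forall M : R, Mstar <= M ->
  let M' := Rpower M b in
  forall F G : Z -> C,
    F 0%Z = RtoC 1 ->
    (forall s : Z, 1 <= zabs s < M' -> F s = RtoC 0) ->
    (forall s : Z, M' <= zabs s <= Rpower M' (tau2 * (1 + eps / 2)) ->
       Cmod (F s) <= Ceps * Rpower M' (-1 + eps)) ->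
    (forall s : Z, Rpower M' (tau2 * (1 + eps / 2)) <= zabs s ->
       Cmod (F s) <= exp (- sqrt (Rabs (IZR s / Rpower M' tau2)))) ->
    Cmod (G 0%Z) <= 2 ->
    (forall s : Z, 0 < zabs s <= Rpower M (tau2 * (1 + eps)) ->
       Cmod (G s) <= 2 * Rpower (zabs s) (- delta + eps)) ->
    (forall s : Z, Rpower M (tau2 * (1 + eps)) <= zabs s ->
       Cmod (G s) <= exp (- (1/2) * sqrt (Rabs (IZR s / Rpower M tau2)))) ->
    (forall s : Z, zabs s <= Rpower M (tau2 * (1 + eps)) ->
       Cmod (Cminus (zconv F G s) (G s)) <= Rpower M' (- delta)) /\
    (forall s : Z, Rpower M (tau2 * (1 + eps)) < zabs s <= Rpower M' (tau2 * (1 + eps)) ->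
       Cmod (zconv F G s) <= Rpower (zabs s) (- delta + eps)) /\
    (forall s : Z, Rpower M' (tau2 * (1 + eps)) < zabs s ->
       Cmod (zconv F G s) <= exp (- (1/2) * sqrt (Rabs (IZR s / Rpower M' tau2)))).
Proof.
  intros delta.
  destruct (large_scale_eventually tau2 b eps Ceps Htau2 Hb Heps Hdelta HC) as [M0 HM0].
  exists (Rmax 1 (M0 + 1)). split; [apply Rlt_le_trans with 1; [lra | apply Rmax_l]|].
  intros M HM M' F G HF0 HFgap HFmid HFtail HG0 HGpoly HGtail.
  destruct (HM0 M ltac:(generalize (Rmax_r 1 (M0 + 1)); lra))
    as [[HA' [HK1 [HKM' [HM'L [HLN [Hc1 Hjoin]]]]]] [Hnear [Hmid Hfar]]].
  assert (HA : 0 < Rpower M tau2) by apply Rpower_pos.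
  assert (HA'pos : 0 < Rpower M' tau2) by apply Rpower_pos.
  assert (Hq := profile_exponent_range tau2 b eps Htau2 Hb Heps Hdelta).
  assert (Hexp : - profile_exponent tau2 b eps = - delta + eps)
    by (unfold profile_exponent, target_exponent, delta; ring).
  rewrite <- Hexp in HGpoly |- *.
  assert (HFtail' := tail_hyp_zabs F (fun v => exp (- sqrt v)) _ _ HA'pos HFtail).
  assert (HGtail' := tail_hyp_zabs G (fun v => exp (- (1/2) * sqrt v)) _ _ HA HGtail).
  simpl in HFtail', HGtail'.
  split; [|split]; intros s Hs.
  - eapply Rle_trans; [|exact Hnear]. eapply conv_near_origin; eassumption.
  - apply Rle_trans with (Rpower (Rpower M' (tau2 * (1 + eps))) (- profile_exponent tau2 b eps)).
    + eapply Rle_trans; [|exact Hmid]. eapply conv_intermediate; eassumption.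
    + apply Rpower_antitone; lra.
  - rewrite Rabs_IZR_div by exact HA'pos.
    rewrite <- (Rmult_1_l (exp (- (1/2) * sqrt (zabs s / Rpower M' tau2)))).
    eapply Rle_trans; [|apply Rmult_le_compat_r; [left; apply exp_pos | exact Hfar]].
    eapply conv_far; eassumption.
Qed.
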